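(* Let $\mathcal{N}^g=\{n: T(n)\in\mathcal{G}\}$ be the target set. Then LevinTS run with policy $\pi$ satisfies $$N(\mathrm{LevinTS},\mathcal{N}^g)\le \min_{n\in\mathcal{N}^g}\frac{\ell(n)}{\pi(n)},$$ where $N(\mathrm{LevinTS},\mathcal{N}^g)$ is the number of node selections made by LevinTS up to and including the first selected node belonging to $\mathcal{N}^g$.
   Context: Setting: a finite action set $\mathcal{A}$, a set of states $\mathcal{S}$ with initial state $s_0$, a deterministic transition function $T:\mathcal{S}\times\mathcal{A}\to\mathcal{S}$, and a set of goal states $\mathcal{G}\subseteq\mathcal{S}$. Nodes are finite sequences of actions; the root $n_0$ is the empty sequence; $T(n)$ is the state reached from $s_0$ by applying the actions of $n$ in order; the children of $n$ are $na$, $a\in\mathcal{A}$. For a node $n$ consisting of $t$ actions, $\ell(n):=t+1$. A policy is a function $\pi$ from nodes to $[0,1]$ with $\pi(n_0)=1$ and $\pi(n)=\sum_{a\in\mathcal{A}}\pi(na)$; $\pi(a\mid n)=\pi(na)/\pi(n)$; $\ell(n)/\pi(n)=+\infty$ if $\pi(n)=0$. The policy is Markovian if $\pi(a\mid n_1)=\pi(a\mid n_2)$ whenever $T(n_1)=T(n_2)$. LevinTS: maintain a frontier $\mathcal{F}$, initially $\{n_0\}$, and a record set $\mathcal{V}$, initially $\emptyset$. While $\mathcal{F}\neq\emptyset$: remove from $\mathcal{F}$ a node $n$ minimizing $\ell(n)/\pi(n)$ (this counts as one node selection/expansion); if $T(n)\in\mathcal{G}$, stop with success; if $\pi$ is Markovian,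 then if there is $n'\in\mathcal{V}$ with $T(n')=T(n)$ and $\pi(n')\ge\pi(n)$, skip to the next iteration (state cut), and otherwise add $n$ to $\mathcal{V}$; finally add all children of $n$ to $\mathcal{F}$. *)

From mathcomp Require Import all_boot all_order all_algebra.
From mathcomp Require Import reals constructive_ereal.
Set Implicit Arguments. Unset Strict Implicit. Unset Printing Implicit Defensive.
Import Order.TTheory GRing.Theory Num.Theory.
Local Open Scope ring_scope.

Section LevinTS.
Variables (R : realType) (A : finType) (S : Type).
Variables (T : S -> A -> S) (s0 : S) (G : S -> Prop) (pi : seq A -> R).

(* Nodes are sequences of actions; the child of n by action a is rcons n a. *)
Definition reach (n : seq A) : S := foldl T s0 n.

Definition ell (n : seq A) : nat := (size n).+1.

Definition is_policy : Prop :=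
  [/\ pi [::] = 1,
      (forall n, 0 <= pi n <= 1) &
      (forall n, pi n = \sum_(a : A) pi (rcons n a))].

Definition cond_pi (a : A) (n : seq A) : R := pi (rcons n a) / pi n.

Definition markovian : Prop :=
  forall n1 n2 a, reach n1 = reach n2 -> 0 < pi n1 -> 0 < pi n2 ->
    cond_pi a n1 = cond_pi a n2.

Definition cost (n : seq A) : \bar R :=
  if pi n == 0 then +oo%E else ((ell n)%:R / pi n)%:E.

Definition children (n : seq A) : seq (seq A) := [seq rcons n a | a <- enum A].

Definition selectable (F : seq (seq A)) (n : seq A) : Prop :=
  n \in F /\ forall m, m \in F -> (cost n <= cost m)%E.

Definition levin_step (F V : seq (seq A)) (n : seq A) (F' V' : seq (seq A)) : Prop :=
  selectable F n /\ ~ G (reach n) /\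
  [\/ [/\ markovian,
          (exists2 n', n' \in V & reach n' = reach n /\ pi n <= pi n'),
          F' = rem n F & V' = V],
      [/\ markovian,
          ~ (exists2 n', n' \in V & reach n' = reach n /\ pi n <= pi n'),
          F' = rem n F ++ children n & V' = n :: V]
    | ~ markovian /\ F' = rem n F ++ children n /\ V' = V].

(* levin_run sel F V : a partial execution of LevinTS (with any tie-breaking)
   whose selected nodes so far are sel (none of them a goal), ending with
   frontier F and record set V. *)
Inductive levin_run : seq (seq A) -> seq (seq A) -> seq (seq A) -> Prop :=
| levin_run0 : levin_run [::] [:: [::]] [::]
| levin_runS sel F V n F' V' :
    levin_run sel F V -> levin_step F V n F' V' ->
    levin_run (rcons sel n) F' V'.

End LevinTS.

(* Let g be a goal node of finite cost c = l(g)/pi(g).  Walking down the path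
   from the root to g, one always reaches a frontier node k with
   cost(k) <= c: an expanded selected node hands over to its child on the
   path, and a selected node removed by the state cut hands over to the
   earlier selected node that dominates it (same state, larger probability,
   smaller cost); by the Markov property the continuations of the two nodes
   along the same suffix keep these relations.  Selected nodes never cost more
   than frontier nodes, so the selected nodes and k are size sel + 1 distinct
   nodes m with l(m) <= c pi(m).  There are at most c of them: the prefix
   closure of such a set has at most as many nodes as the sum of l over its
   leaves, and the probabilities of the leaves sum to at most 1. *)

From mathcomp Require Import all_boot all_order all_algebra.
From mathcomp Require Import reals constructive_ereal.
From mathcomp Require Import zify.
Import Order.TTheory GRing.Theory Num.Theory.
Local Open Scope ring_scope.
Set Implicit Arguments. Unset Strict Implicit.

Section Policy.
Variables (R : realType) (A : finType) (pi : seq A -> R).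
Hypothesis pi_policy : is_policy pi.

Lemma policy_ge0 n : 0 <= pi n.
Proof. by case: pi_policy => _ /(_ n)/andP[]. Qed.

Lemma policy_rcons_le n a : pi (rcons n a) <= pi n.
Proof.
case: pi_policy => _ _ pi_sum; rewrite [pi n]pi_sum (bigD1 a) //= lerDl.
by rewrite sumr_ge0 // => b _; apply: policy_ge0.
Qed.

Lemma policy_cat_le n t : pi (n ++ t) <= pi n.
Proof.
elim/last_ind: t => [|t a IHt]; first by rewrite cats0.
by rewrite -rcons_cat (le_trans (policy_rcons_le _ _)).
Qed.

Lemma ell_cat (n t : seq A) : ell (n ++ t) = (ell n + size t)%N.
Proof. by rewrite /ell size_cat addSn. Qed.

Lemma cost_le_finE x y : 0 < pi x -> 0 < pi y ->
  (cost pi x <= cost pi y)%E = ((ell x)%:R * pi y <= (ell y)%:R * pi x).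
Proof.
move=> px py; rewrite /cost !gt_eqF // lee_fin.
by rewrite ler_pdivrMr // mulrAC ler_pdivlMr.
Qed.

Lemma ell_le_of_cost_le m c : (cost pi m <= c%:E)%E -> (ell m)%:R <= c * pi m.
Proof.
rewrite /cost; case: eqP => [//|/eqP pm]; rewrite lee_fin ler_pdivrMr //.
by rewrite lt_def pm policy_ge0.
Qed.

Lemma cost_le_cat n t : (cost pi n <= cost pi (n ++ t))%E.
Proof.
have [pnt0|pnt] := eqVneq (pi (n ++ t)) 0; first by rewrite /cost pnt0 eqxx leey.
have pnt_gt0 : 0 < pi (n ++ t) by rewrite lt_def pnt policy_ge0.
have le_nt := policy_cat_le n t.
rewrite cost_le_finE ?(lt_le_trans pnt_gt0) // ell_cat natrD mulrDl.
rewrite -[X in X <= _]addr0 lerD ?mulr_ge0 ?policy_ge0 //.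
by rewrite ler_wpM2l.
Qed.

Lemma size_le_count_children (p : seq A) M : {in M, forall m, prefix p m} ->
  (size M <= count_mem p M + \sum_(a : A) count (prefix (rcons p a)) M)%N.
Proof.
elim: M => [//|m M IHM] pM /=; rewrite big_split /=.
have m_counted : (1 <= (m == p) + \sum_(a : A) prefix (rcons p a) m)%N.
  have /prefixP[[|a s] ->] := pM m (mem_head _ _); first by rewrite cats0 eqxx.
  by rewrite (bigD1 a) //= -cat_rcons prefix_prefix addnCA.
have := leq_add m_counted (IHM (fun x xM => pM x (mem_behead (s := m :: M) xM))).
by rewrite addnACA.
Qed.

(* Counting the [size p] strict ancestors of [p] together with [M] is what makes
   the bound add up over the children of [p]. *)
Lemma subtree_weight_le c N p M : 0 <= c ->
  {in M, forall m, prefix p m /\ (size m < size p + N)%N} -> uniq M ->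
  {in M, forall m, (ell m)%:R <= c * pi m} ->
  (size M + (M != [::]) * size p)%:R <= c * pi p.
Proof.
move=> c_ge0; elim: N p M => [|N IHN] p M MP uM Mc.
  case: M MP {uM Mc} => [|m M] MP; first by rewrite mul0n mulr_ge0 ?policy_ge0.
  have [/prefixP[s ->]] := MP m (mem_head _ _).
  by rewrite size_cat addn0 ltnNge leq_addr.
pose Ma a := [seq m <- M | prefix (rcons p a) m].
have IHa a : (size (Ma a) + (Ma a != [::]) * (size p).+1)%:R <= c * pi (rcons p a).
  rewrite -(size_rcons p a); apply: IHN => [m||m]; rewrite ?filter_uniq // mem_filter.
    by case/andP=> pam /MP[_]; rewrite size_rcons addSnnS.
  by case/andP=> _ /Mc.
have sum_IH : (\sum_(a : A) (size (Ma a) + (Ma a != [::]) * (size p).+1))%:R <= c * pi p.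
  by case: pi_policy => _ _ pi_sum; rewrite natr_sum [pi p]pi_sum mulr_sumr ler_sum.
have size_M : (size M <= (p \in M) + \sum_(a : A) size (Ma a))%N.
  rewrite -count_uniq_mem //; under eq_bigr do rewrite size_filter.
  exact: size_le_count_children (fun m mM => (MP m mM).1).
set k := (\sum_(a : A) (Ma a != [::]))%N.
have [k0|k_gt0] := posnP k.
  have Ma0 a : Ma a = [::].
    by move/eqP: k0; rewrite sum_nat_eq0 => /forallP/(_ a); rewrite eqb0 negbK => /eqP.
  rewrite big1 ?addn0 in size_M; last by move=> a _; rewrite Ma0.
  case: (boolP (p \in M)) size_M => [pM | _] /= size_M.
    apply: le_trans (Mc p pM); rewrite ler_nat /ell.
    by case: (M != [::]) size_M => /=; lia.
  by move: size_M; rewrite leqn0 size_eq0 => /eqP ->; rewrite mul0n mulr_ge0 ?policy_ge0.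
apply: le_trans sum_IH; rewrite ler_nat big_split -big_distrl /= -/k.
case: (M != [::]) (p \in M) size_M => [] [] /=; nia.
Qed.

Lemma size_le_cost_bound c M : 0 <= c -> uniq M ->
  {in M, forall m, (cost pi m <= c%:E)%E} -> (size M)%:R <= c.
Proof.
move=> c_ge0 uM Mc; case: (pi_policy) => pi_root _ _.
have size_lt m : m \in M -> (size m < size ([::] : seq A) + (\sum_(x <- M) size x).+1)%N.
  by move=> mM; rewrite ltnS (bigD1_seq m) //= leq_addr.
have := subtree_weight_le c_ge0 (fun m mM => conj (prefix0s m) (size_lt m mM)) uM
  (fun m mM => ell_le_of_cost_le (Mc m mM)).
by rewrite muln0 addn0 pi_root mulr1.
Qed.

End Policy.

Section Dominance.
Variables (R : realType) (A : finType) (S : Type).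
Variables (T : S -> A -> S) (s0 : S) (pi : seq A -> R).
Hypothesis pi_policy : is_policy pi.

Definition dominates (x y : seq A) : Prop :=
  [/\ reach T s0 x = reach T s0 y, pi y <= pi x & (cost pi x <= cost pi y)%E].

Lemma reach_cat x y t :
  reach T s0 x = reach T s0 y -> reach T s0 (x ++ t) = reach T s0 (y ++ t).
Proof. by rewrite /reach !foldl_cat => ->. Qed.

Lemma markovian_pi_cat x y t : markovian T s0 pi ->
  reach T s0 x = reach T s0 y -> 0 < pi x -> 0 < pi y ->
  pi (x ++ t) * pi y = pi (y ++ t) * pi x.
Proof.
move=> markov rxy px py; elim/last_ind: t => [|t a IHt]; first by rewrite !cats0 mulrC.
have eq0_xy : (pi (x ++ t) == 0) = (pi (y ++ t) == 0).
  by have := congr1 (eq_op^~ 0) IHt; rewrite !mulf_eq0 (gt_eqF px) (gt_eqF py) !orbF.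
rewrite -!rcons_cat; have [pyt0|pyt_neq0] := eqVneq (pi (y ++ t)) 0.
  suff rcons0 n : pi n = 0 -> pi (rcons n a) = 0.
    by rewrite !rcons0 ?mul0r //; apply/eqP; rewrite eq0_xy pyt0.
  by move=> pn0; apply/eqP; rewrite eq_le policy_ge0 // andbT -pn0 policy_rcons_le.
have pyt : 0 < pi (y ++ t) by rewrite lt_def pyt_neq0 policy_ge0.
have pxt : 0 < pi (x ++ t) by rewrite lt_def eq0_xy pyt_neq0 policy_ge0.
have := markov _ _ a (reach_cat t rxy) pxt pyt; rewrite /cond_pi => cond_eq.
rewrite -(divfK (lt0r_neq0 pxt) (pi (rcons (x ++ t) a))).
by rewrite -(divfK (lt0r_neq0 pyt) (pi (rcons (y ++ t) a))) cond_eq -!mulrA IHt.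
Qed.

Lemma dominates_cat x y t : markovian T s0 pi ->
  dominates x y -> 0 < pi (y ++ t) -> dominates (x ++ t) (y ++ t).
Proof.
move=> markov [rxy pyx cxy] pyt.
have py : 0 < pi y := lt_le_trans pyt (policy_cat_le pi_policy y t).
have px : 0 < pi x := lt_le_trans py pyx.
have ratio := markovian_pi_cat t markov rxy px py.
have pyxt : pi (y ++ t) <= pi (x ++ t).
  by rewrite -(ler_pM2r py) ratio ler_wpM2l ?policy_ge0.
have pxt := lt_le_trans pyt pyxt.
split; [exact: reach_cat | exact: pyxt |].
move: cxy; rewrite !cost_le_finE // !ell_cat !natrD => cxy.
have weighted : ((ell x)%:R + (size t)%:R) * pi y <= ((ell y)%:R + (size t)%:R) * pi x.
  by rewrite !mulrDl lerD // ler_wpM2l.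
rewrite -(ler_pM2r py) -[X in _ <= X]mulrA ratio mulrAC [X in X <= _]mulrC.
by rewrite [X in _ <= X]mulrCA ler_wpM2l ?policy_ge0.
Qed.

End Dominance.

Section Run.
Variables (R : realType) (A : finType) (S : Type).
Variables (T : S -> A -> S) (s0 : S) (G : S -> Prop) (pi : seq A -> R).
Hypothesis pi_policy : is_policy pi.

(* [sel] lists the selected nodes in selection order, so [index] compares
   selection times. *)
Record levin_inv (sel F V : seq (seq A)) : Prop := LevinInv {
  inv_uniq : uniq (sel ++ F);
  inv_root : [::] \in sel ++ F;
  inv_parent : forall p a, rcons p a \in sel ++ F -> p \in sel;
  inv_cost : forall x y, x \in sel -> y \in F -> (cost pi x <= cost pi y)%E;
  inv_nongoal : forall x, x \in sel -> ~ G (reach T s0 x);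
  inv_record : {subset V <= sel};
  inv_closed : forall v, v \in sel ->
    (forall a, rcons v a \in sel ++ F) \/
    markovian T s0 pi /\
    exists2 v', (index v' sel < index v sel)%N & dominates T s0 pi v' v }.

Lemma levin_inv0 : levin_inv [::] [:: [::]] [::].
Proof. by split=> // p a; rewrite inE -size_eq0 size_rcons. Qed.

Lemma mem_children (n : seq A) a : rcons n a \in children n.
Proof. by rewrite mem_map ?mem_enum //; apply: rcons_injr. Qed.

Section Step.
Variables (sel F V : seq (seq A)) (n : seq A) (F' V' : seq (seq A)).
Hypotheses (inv : levin_inv sel F V) (step : levin_step T s0 G pi F V n F' V').

Lemma levin_step_cases :
  [/\ n \in F, {in F, forall m, (cost pi n <= cost pi m)%E}, ~ G (reach T s0 n),
      {subset V' <= n :: V} &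
      F' = rem n F /\ markovian T s0 pi /\
        (exists2 n', n' \in V & reach T s0 n' = reach T s0 n /\ pi n <= pi n')
      \/ F' = rem n F ++ children n].
Proof.
case: step => -[nF n_min] [nG [[markov cut -> ->]|[_ _ -> ->]|[_ [-> ->]]]].
- by split=> // [v vV|]; [rewrite inE vV orbT | left].
- by split=> //; right.
- by split=> // [v vV|]; [rewrite inE vV orbT | right].
Qed.

Lemma step_notin_sel : n \notin sel.
Proof.
have [nF _ _ _ _] := levin_step_cases.
by move: (inv_uniq inv); rewrite cat_uniq => /and3P[_ /hasPn/(_ n nF)].
Qed.

Lemma step_perm : perm_eq (sel ++ F) (rcons sel n ++ rem n F).
Proof.
have [nF _ _ _ _] := levin_step_cases.
by rewrite cat_rcons perm_cat2l perm_to_rem.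
Qed.

Lemma step_mem_old : {subset sel ++ F <= rcons sel n ++ F'}.
Proof.
have [_ _ _ _ [[-> _]|->]] := levin_step_cases => x; rewrite (perm_mem step_perm) //.
by move=> xs; rewrite catA mem_cat xs.
Qed.

Lemma step_frontier : {subset F' <= F ++ children n}.
Proof.
have [_ _ _ _ [[-> _]|->]] := levin_step_cases => x.
  by move/mem_rem; rewrite mem_cat => ->.
by rewrite !mem_cat => /orP[/mem_rem -> | ->]; rewrite ?orbT.
Qed.

Lemma step_uniq : uniq (rcons sel n ++ F').
Proof.
have U := inv_uniq inv; rewrite (perm_uniq step_perm) in U.
have [_ _ _ _ [[-> _]|->]] := levin_step_cases => //.
rewrite catA cat_uniq U map_inj_uniq ?enum_uniq ?andbT; last exact: rcons_injr.
apply/hasPn => _ /mapP[a _ ->]; rewrite -(perm_mem step_perm).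
by apply: contra step_notin_sel => /(inv_parent inv).
Qed.

Lemma step_mem_new : {subset rcons sel n ++ F' <= sel ++ F ++ children n}.
Proof.
have [nF _ _ _ _] := levin_step_cases.
move=> x; rewrite catA !mem_cat mem_rcons inE -orbA.
case/or3P=> [/eqP -> | -> // | /step_frontier]; first by rewrite nF orbT.
by rewrite mem_cat => /orP[] ->; rewrite ?orbT.
Qed.

Lemma step_parent p a : rcons p a \in rcons sel n ++ F' -> p \in rcons sel n.
Proof.
move/step_mem_new; rewrite catA mem_cat => /orP[/(inv_parent inv) ps | ].
  by rewrite mem_rcons inE ps orbT.
by case/mapP=> b _ /rcons_inj[-> _]; rewrite mem_rcons mem_head.
Qed.

Lemma step_cost x y : x \in rcons sel n -> y \in F' -> (cost pi x <= cost pi y)%E.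
Proof.
have [nF n_min _ _ _] := levin_step_cases.
have cost_child m b : m \in rcons sel n -> (cost pi m <= cost pi (rcons n b))%E.
  move=> ms; rewrite -cats1; apply: le_trans (cost_le_cat pi_policy n _).
  by move: ms; rewrite mem_rcons inE => /orP[/eqP -> // | /(inv_cost inv)/(_ nF)].
rewrite mem_rcons inE => xsn /step_frontier; rewrite mem_cat => /orP[yF | /mapP[b _ ->]].
  by case/orP: xsn => [/eqP -> | /(inv_cost inv)]; [apply: n_min | apply].
by apply: cost_child; rewrite mem_rcons.
Qed.

Lemma step_closed v : v \in rcons sel n ->
  (forall a, rcons v a \in rcons sel n ++ F') \/
  markovian T s0 pi /\
  exists2 v', (index v' (rcons sel n) < index v (rcons sel n))%N &
    dominates T s0 pi v' v.
Proof.
have [nF _ _ _ cases] := levin_step_cases.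
have index_old x : x \in sel -> index x (rcons sel n) = index x sel.
  by move=> xs; rewrite -cats1 index_cat xs.
rewrite mem_rcons inE => /orP[/eqP -> | vs].
  case: cases => [[_ [markov [n' n'V [rn' pn']]]] | ->]; [right | left].
    have n's := inv_record inv n'V.
    split=> //; exists n'; last by split=> //; apply: (inv_cost inv).
    rewrite index_old // -cats1 index_cat (negbTE step_notin_sel) /= eqxx addn0.
    by rewrite index_mem.
  by move=> a; rewrite catA mem_cat mem_children orbT.
case: (inv_closed inv vs) => [expanded | [markov [v' lt_v'v dom_v'v]]].
  by left=> a; apply: step_mem_old.
right; split=> //; exists v' => //.
have v's : v' \in sel by rewrite -index_mem (ltn_trans lt_v'v) ?index_mem.
by rewrite !index_old.
Qed.

Lemma levin_step_inv : levin_inv (rcons sel n) F' V'.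
Proof.
have [_ _ nG V'sub _] := levin_step_cases.
split.
- exact: step_uniq.
- exact: step_mem_old (inv_root inv).
- exact: step_parent.
- exact: step_cost.
- by move=> x; rewrite mem_rcons inE => /orP[/eqP -> // | /(inv_nongoal inv)].
- move=> v /V'sub; rewrite mem_rcons !inE => /orP[-> // | /(inv_record inv) ->].
  by rewrite orbT.
- exact: step_closed.
Qed.

End Step.

Lemma levin_run_inv sel F V : levin_run T s0 G pi sel F V -> levin_inv sel F V.
Proof.
elim=> [|sel' F0 V0 n F1 V1 _ inv step]; first exact: levin_inv0.
exact: levin_step_inv inv step.
Qed.

Lemma frontier_cost_le sel F V s v : levin_inv sel F V ->
  v \in sel ++ F -> G (reach T s0 (v ++ s)) -> 0 < pi (v ++ s) ->
  exists2 k, k \in F & (cost pi k <= cost pi (v ++ s))%E.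
Proof.
move=> inv; elim: s v => [|a s IHs] v;
  rewrite mem_cat => /orP[vs|vF] Gvs pvs; try by exists v; rewrite ?cost_le_cat.
  by move: Gvs; rewrite cats0 => /(inv_nongoal inv vs).
have [i] := ubnP (index v sel); elim: i v vs Gvs pvs => // i IHi v vs Gvs pvs lt_vi.
case: (inv_closed inv vs) => [expanded | [markov [v' lt_v'v dom_v'v]]].
  by move: Gvs pvs; rewrite -cat_rcons; apply: IHs.
have [rv' pv' cv'] := dominates_cat pi_policy markov dom_v'v pvs.
have v's : v' \in sel by rewrite -index_mem (ltn_trans lt_v'v) ?index_mem.
have [|||k kF ck] := IHi v' v's; rewrite ?rv' ?(lt_le_trans pvs pv') //.
  exact: leq_trans lt_v'v (ltnSE lt_vi).
by exists k => //; apply: le_trans cv'.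
Qed.

End Run.

Unset Implicit Arguments.

Theorem theorem3 (R : realType) (A : finType) (S : Type)
  (T : S -> A -> S) (s0 : S) (G : S -> Prop) (pi : seq A -> R) :
  is_policy pi ->
  forall (sel F V : seq (seq A)),
    levin_run T s0 G pi sel F V ->
    forall g : seq A, G (reach T s0 g) ->
      (((size sel).+1)%:R%:E <= cost pi g)%E /\
      ((cost pi g < +oo)%E -> F != [::]).
Proof.
move=> pi_policy sel F V run g Gg.
have inv := levin_run_inv pi_policy run.
have [pg0|pg_neq0] := eqVneq (pi g) 0; first by rewrite /cost pg0 eqxx leey ltxx.
have pg : 0 < pi g by rewrite lt_def pg_neq0 policy_ge0.
have [k kF cost_k] := frontier_cost_le pi_policy inv (inv_root inv) Gg pg.
split; last by case: F kF {inv run}.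
have uniq_selk : uniq (rcons sel k).
  apply: subseq_uniq (inv_uniq inv).
  by rewrite -cats1 cat_subseq ?subseq_refl ?sub1seq.
have sel_cost m : m \in rcons sel k -> (cost pi m <= cost pi g)%E.
  rewrite mem_rcons inE => /orP[/eqP -> // | ms].
  exact: le_trans (inv_cost inv ms kF) cost_k.
have cost_g : cost pi g = ((ell g)%:R / pi g)%:E by rewrite /cost (negbTE pg_neq0).
have c_ge0 : 0 <= (ell g)%:R / pi g by rewrite divr_ge0 ?policy_ge0.
have := size_le_cost_bound pi_policy c_ge0 uniq_selk.
by rewrite size_rcons cost_g lee_fin; apply => m /sel_cost; rewrite cost_g.
Qed.
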